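(* Let $d$ and $m$ be positive integers with $m\ge 3$ and $m>2^{d-1}$. Let $w$ be a vertex of $\Gamma_m^*$ (defined below) with $\mathrm{d}((x_1,0),w)=d$ in $\Gamma_m^*$. Write $w=(x_{\beta_1}+\dots+x_{\beta_s},0)$ with $\beta_1<\dots<\beta_s$ (the unique expression of the first coordinate in the basis $x_1,\dots,x_m$). Then every index $n\in\{\beta_1,\dots,\beta_s\}$ satisfies $n\le 2^{d-1}+1$.
   Context: For an integer $m\ge 3$, let $V_m$ and $W_m$ be vector spaces over $\mathrm{GF}(2)$ of dimensions $m$ and $m-2$, with ordered bases $x_1,\dots,x_m$ and $y_1,\dots,y_{m-2}$ respectively. Let $f_m:V_m\times V_m\to W_m$ be the bilinear map determined on basis vectors by $f_m(x_i,x_j)=0$ if $j\in\{i,i+1\}$, $f_m(x_i,x_j)=y_{j-i-1}$ if $i+2\le j\le m$, and $f_m(x_i,x_j)=0$ if $i>j$. The group $H_m$ has underlying set $V_m\times W_m$ with multiplication $(a,b)\cdot(c,d)=(a+c,\ f_m(a,c)+b+d)$; its identity is $(0,0)$. The graph $\Gamma_m^*$ has as vertex set the non-identity elements of $X=\{(v,0)\mid v\in V_m\}$, two distinct vertices being adjacent if and only if they commute in $H_m$; $\mathrm{d}(\cdot,\cdot)$ denotes graph distance in $\Gamma_m^*$. *)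

From mathcomp Require Import all_boot all_order all_algebra.
Set Implicit Arguments. Unset Strict Implicit. Unset Printing Implicit Defensive.
Import GRing.Theory.
Local Open Scope ring_scope.

(* V_m = GF(2)^m as row vectors; basis vector x_(i+1) is the i-th unit
   row vector (0-based index i : 'I_m).  W_m = GF(2)^(m-2). *)
Definition Vm (m : nat) := 'rV['F_2]_m.
Definition Wm (m : nat) := 'rV['F_2]_(m - 2).

(* y_(k+1), 0-based index k *)
Definition ybasis (m k : nat) : Wm m := \row_(l < m - 2) ((l : nat) == k)%:R.

(* f_m on basis vectors (0-based indices): f(x_i, x_j) = y_(j-i-1) in
   1-based indexing, i.e. 0-based y index j - i - 2, when i + 2 <= j; else 0. *)
Definition fbasis (m : nat) (i j : 'I_m) : Wm m :=
  if (i.+2 <= j)%N then ybasis m (j - i - 2) else 0.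

Definition fm (m : nat) (a c : Vm m) : Wm m :=
  \sum_(i < m) \sum_(j < m) (a 0 i * c 0 j) *: fbasis i j.

Definition Hmul (m : nat) (g h : Vm m * Wm m) : Vm m * Wm m :=
  (g.1 + h.1, fm g.1 h.1 + g.2 + h.2).

(* adjacency in Gamma_m^*: vertices are (v,0) with v <> 0 *)
Definition is_vertex (m : nat) (v : Vm m) : bool := v != 0.

Definition gadj (m : nat) : rel (Vm m) := fun u v =>
  [&& is_vertex u, is_vertex v, u != v &
      Hmul (u, 0) (v, 0) == Hmul (v, 0) (u, 0)].

Definition walk_len (m : nat) (u w : Vm m) (k : nat) : Prop :=
  exists p : seq (Vm m), [/\ size p = k, path (@gadj m) u p & last u p = w].

Definition gdist_eq (m : nat) (u w : Vm m) (k : nat) : Prop :=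
  walk_len u w k /\ forall k', (k' < k)%N -> ~ walk_len u w k'.

Definition x1 (m : nat) : Vm m := \row_(l < m) ((l : nat) == 0%N)%:R.

From mathcomp Require Import all_boot all_order all_algebra.
From mathcomp Require Import zify.
Set Implicit Arguments. Unset Strict Implicit. Unset Printing Implicit Defensive.
Import GRing.Theory.
Local Open Scope ring_scope.

(* If u is supported on x_1..x_N and v commutes with u, compare the coefficient
   of y_(b-c-1) in f(u,v) and f(v,u), where x_c is the lowest basis vector in u
   and x_b the highest in v: in f(u,v) it is 1, while f(v,u) has no terms that
   high once b >= 2N.  So every step along an edge of Gamma_m^* at most doubles
   the (shifted) support bound, and any walk of length d from x_1 ends inside
   x_1..x_(2^(d-1)+1). *)

Definition supported_below m (u : Vm m) (N : nat) :=
  forall i : 'I_m, u 0 i != 0 -> (i < N)%N.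

Lemma fm_coef m (u v : Vm m) (l : 'I_(m - 2)) :
  fm u v 0 l =
  \sum_(i < m) \sum_(j < m | (i.+2 <= j)%N && (l == (j - i - 2)%N :> nat)) u 0 i * v 0 j.
Proof.
rewrite /fm summxE; apply: eq_bigr => i _; rewrite summxE [RHS]big_mkcond /=.
apply: eq_bigr => j _; rewrite mxE /fbasis.
by case: ifP => _ /=; rewrite ?mxE ?mulr0 //; case: eqP; rewrite ?mulr1 ?mulr0.
Qed.

Lemma fm_coef_high m (u v : Vm m) N (l : 'I_(m - 2)) :
  supported_below v N -> (N <= l + 2)%N -> fm u v 0 l = 0.
Proof.
move=> sv hl; rewrite fm_coef; apply: big1 => i _; apply: big1 => j /andP[hij /eqP hl'].
have [->|vj] := eqVneq (v 0 j) 0; first by rewrite mulr0.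
by have := sv j vj; lia.
Qed.

Lemma fm_coef_extreme m (u v : Vm m) (c b : 'I_m) (l : 'I_(m - 2)) :
  (forall i, u 0 i != 0 -> (c <= i)%N) -> (forall j, v 0 j != 0 -> (j <= b)%N) ->
  (c.+2 <= b)%N -> l = (b - c - 2)%N :> nat -> fm u v 0 l = u 0 c * v 0 b.
Proof.
move=> cmin bmax hcb hl; rewrite fm_coef (bigD1 c) //= (bigD1 b) /=; last first.
  by rewrite hcb hl eqxx.
rewrite !big1 ?addr0 // => [i ic | j /andP[/andP[hcj /eqP hj] jb]].
  apply: big1 => j /andP[hij /eqP hj].
  have [->|ui] := eqVneq (u 0 i) 0; first by rewrite mul0r.
  have [->|vj] := eqVneq (v 0 j) 0; first by rewrite mulr0.
  move: (cmin i ui) (bmax j vj) => hci hjb.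
  have ei : i = c by apply: ord_inj; lia.
  by rewrite ei eqxx in ic.
have [->|vj] := eqVneq (v 0 j) 0; first by rewrite mulr0.
move: (bmax j vj) => hjb.
have ej : j = b by apply: ord_inj; lia.
by rewrite ej eqxx in jb.
Qed.

Lemma commuting_supported_below m (u v : Vm m) N :
  u != 0 -> fm u v = fm v u -> supported_below u N ->
  supported_below v (maxn 2 (N.*2.-1)).
Proof.
move=> u0 huv su n vn; rewrite ltnNge; apply/negP => hn.
have [i0 ui0] : exists i, u 0 i != 0.
  apply/existsP; apply: contraR u0 => /existsPn u0.
  by apply/eqP/rowP => i; rewrite mxE; apply/eqP/negbNE/u0.
case: (@arg_minnP _ i0 (fun i => u 0 i != 0) (fun i : 'I_m => i : nat) ui0) => c uc cmin.
case: (@arg_maxnP _ n (fun i => v 0 i != 0) (fun i : 'I_m => i : nat) vn) => b vb bmax.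
have cN := su c uc; have nb := bmax n vn; have bm := ltn_ord b.
have hl : (b - c - 2 < m - 2)%N by lia.
have := congr1 (fun M : Wm m => M 0 (Ordinal hl)) huv => /=.
rewrite (fm_coef_extreme cmin bmax) //; last by lia.
rewrite (fm_coef_high _ su) /=; last by lia.
by move/eqP; rewrite mulf_eq0 (negbTE uc) (negbTE vb).
Qed.

Lemma gadj_fmC m (u v : Vm m) : gadj u v -> fm u v = fm v u.
Proof. by case/and4P => _ _ _ /eqP[_]; rewrite !addr0. Qed.

Lemma gadj_path_supported_below m (u : Vm m) (p : seq (Vm m)) k :
  path (@gadj m) u p -> supported_below u (2 ^ k + 1)%N ->
  supported_below (last u p) (2 ^ (k + size p) + 1)%N.
Proof.
elim: p u k => [|v p IH] u k /=; first by rewrite addn0.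
case/andP => uv pp su; have /and4P[u0 _ _ _] := uv.
rewrite -[(k + _)%N]addSnnS; apply: IH => // n vn.
have := commuting_supported_below u0 (gadj_fmC uv) su vn.
by rewrite expnS; have := expn_gt0 2 k; lia.
Qed.

Theorem lemma2p3 (d m : nat) (w : Vm m) :
  (0 < d)%N -> (3 <= m)%N -> (2 ^ d.-1 < m)%N ->
  is_vertex w -> gdist_eq (x1 m) w d ->
  forall n : 'I_m, w 0 n != 0 -> (n.+1 <= 2 ^ d.-1 + 1)%N.
Proof.
move=> d0 _ _ _ [[p [sp x1p <-]] _] n.
case: p sp x1p => [sp|v p <- /= /andP[x1v pp]]; first by rewrite -sp in d0.
have sx1 : supported_below (x1 m) 1 by move=> i; rewrite mxE; case: (i : nat).
have sv : supported_below v (2 ^ 0 + 1)%N.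
  have /and4P[x10 _ _ _] := x1v.
  exact: commuting_supported_below x10 (gadj_fmC x1v) sx1.
exact: gadj_path_supported_below pp sv n.
Qed.
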